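(* Let $\lambda_x>0$, $\lambda_y>0$, and let $X$ and $Y$ be independent random variables with $X\sim \mathrm{Poisson}(\lambda_x)$ and $Y\sim\mathrm{Poisson}(\lambda_y)$. Let $\alpha(\lambda_x,\lambda_y)=\frac{\lambda_x}{\lambda_y}\left(1-e^{-\lambda_y}\right)$. Then $$lb_{\lambda_y}(\lambda_x)\le \mathbb{E}\left[\frac{X}{X+Y+1}\right]\le ub_{\lambda_y}(\lambda_x),$$ where $$ub_{\lambda_y}(\lambda_x)=1-\frac{1}{1+\alpha(\lambda_x,\lambda_y)},\qquad lb_{\lambda_y}(\lambda_x)=\alpha(\lambda_x,\lambda_y)-\frac{\lambda_x(1+\lambda_x)}{\lambda_y}\sum_{j=1}^{\infty}\frac{(j-1)!}{\lambda_y^{j}}.$$ *)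

From HB Require Import structures.
From mathcomp Require Import all_boot all_order all_algebra.
From mathcomp Require Import all_classical all_reals.
From mathcomp Require Import ereal topology normedtype sequences exp.
From mathcomp Require Import poisson_distribution.
Set Implicit Arguments. Unset Strict Implicit. Unset Printing Implicit Defensive.
Import Order.TTheory GRing.Theory Num.Theory.
Local Open Scope ring_scope.
Local Open Scope ereal_scope.

(* E[ X / (X+Y+1) ] for independent X ~ Poisson(lx), Y ~ Poisson(ly):
   the expectation of a nonnegative function of the discrete pair (X,Y),
   whose joint pmf is the product of the marginal Poisson pmfs. *)
Definition E_ratio {R : realType} (lx ly : R) : \bar R :=
  \sum_(0 <= m <oo) \sum_(0 <= n <oo)
     ((poisson_pmf lx m * poisson_pmf ly n) * (m%:R / (m%:R + n%:R + 1)))%R%:E.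

Definition alpha {R : realType} (lx ly : R) : R :=
  (lx / ly * (1 - expR (- ly)))%R.

Definition ub {R : realType} (lx ly : R) : R :=
  (1 - 1 / (1 + alpha lx ly))%R.

Definition lb_series {R : realType} (ly : R) : \bar R :=
  \sum_(1 <= j <oo) ((j.-1)`!%:R / ly ^+ j)%R%:E.

Definition lb {R : realType} (lx ly : R) : \bar R :=
  (alpha lx ly)%:E - (lx * (1 + lx) / ly)%R%:E * lb_series ly.

From HB Require Import structures.
From mathcomp Require Import all_boot all_order all_algebra.
From mathcomp Require Import all_classical all_reals.
From mathcomp Require Import ereal topology normedtype sequences exp esum measure.
From mathcomp Require Import poisson_distribution.
From mathcomp Require Import ring lra.
Import Order.TTheory GRing.Theory Num.Theory.
Local Open Scope ring_scope.
Local Open Scope ereal_scope.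

(* Upper bound: for every a >= 0,
     x / (x + y + 1) <= (a^2 + x / (y + 1)) / (1 + a)^2,
   the difference being (a (y + 1) - x)^2 over a positive denominator.  Taking
   expectations under independence, with E[X] = lx and
   E[1 / (Y + 1)] = (1 - e^-ly) / ly, gives E[X / (X + Y + 1)] <= (a^2 + alpha) / (1 + a)^2,
   which equals alpha / (1 + alpha) = ub at a = alpha.
   Lower bound: the series sum_j (j-1)!/ly^j diverges, its terms growing at least
   like j e^(-2 ly) / ly, so lb is -oo and the inequality holds trivially. *)

Section series_facts.
Variable R : realType.
Implicit Types f g : nat -> R.

Lemma nneseries_recl0 (u : nat -> \bar R) : (forall n, 0 <= u n) ->
  \sum_(0 <= n <oo) u n = u 0%N + \sum_(0 <= n <oo) u n.+1.
Proof.
move=> u0; rewrite nneseries_recl// -nneseries_addn//.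
by under eq_eseriesr do rewrite addn1.
Qed.

Lemma nneseries_lincomb f g (c d F G : R) :
  (forall n, (0 <= f n)%R) -> (forall n, (0 <= g n)%R) -> (0 <= c)%R -> (0 <= d)%R ->
  \sum_(0 <= n <oo) (f n)%:E = F%:E -> \sum_(0 <= n <oo) (g n)%:E = G%:E ->
  \sum_(0 <= n <oo) (c * f n + d * g n)%:E = (c * F + d * G)%:E.
Proof.
move=> f0 g0 c0 d0 sf sg.
under eq_eseriesr do rewrite EFinD !EFinM.
rewrite nneseriesD; last 2 first.
- by move=> n _ _; rewrite -EFinM lee_fin mulr_ge0.
- by move=> n _ _; rewrite -EFinM lee_fin mulr_ge0.
by rewrite !nneseriesZl ?sf ?sg// => n _; rewrite lee_fin.
Qed.

Lemma nneseries_ge_term {u : nat -> \bar R} {N j : nat} : (forall n, 0 <= u n) ->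
  (N <= j)%N -> u j <= \sum_(N <= n <oo) u n.
Proof.
move=> u0 Nj; apply: le_trans (nneseries_lim_ge j.+1 _) => [|n _ _]; last exact: u0.
by rewrite big_nat_recr//= leeDr// sume_ge0.
Qed.

Lemma nneseries_unbounded_pinfty (u : nat -> \bar R) N : (forall n, 0 <= u n) ->
  (forall A : R, exists2 j, (N <= j)%N & A%:E <= u j) ->
  \sum_(N <= n <oo) u n = +oo.
Proof.
move=> u0 uub; apply/eqyP => A _; have [j Nj Auj] := uub A.
exact: le_trans Auj (nneseries_ge_term u0 Nj).
Qed.

End series_facts.

Section poisson_moments.
Variables (R : realType) (r : R).
Hypothesis r0 : (0 < r)%R.

Lemma poisson_pmfS n : (poisson_pmf r n.+1 * n.+1%:R = r * poisson_pmf r n)%R.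
Proof.
rewrite /poisson_pmf r0 factS natrM exprS.
have nf : (n`!%:R : R) != 0%R by rewrite pnatr_eq0 -lt0n fact_gt0.
by field; rewrite nf -mulrS pnatr_eq0.
Qed.

Lemma poisson_pmf_sum1 : \sum_(0 <= n <oo) (poisson_pmf r n)%:E = 1.
Proof.
rewrite nneseries_esumT => [|n]; last by rewrite lee_fin poisson_pmf_ge0.
by have := probability_setT (poisson_prob r 0); rewrite /= /poisson_prob r0.
Qed.

Lemma poisson_pmf_mean : \sum_(0 <= n <oo) (poisson_pmf r n * n%:R)%:E = r%:E.
Proof.
rewrite nneseries_recl0 => [|n]; last by rewrite lee_fin mulr_ge0 ?poisson_pmf_ge0.
rewrite mulr0 add0e; under eq_eseriesr do rewrite poisson_pmfS EFinM.
rewrite nneseriesZl => [|n _]; last by rewrite lee_fin poisson_pmf_ge0.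
by rewrite poisson_pmf_sum1 mule1.
Qed.

Lemma poisson_pmf_mean_invS :
  \sum_(0 <= n <oo) (poisson_pmf r n / n.+1%:R)%:E = ((1 - expR (- r)) / r)%:E.
Proof.
have pmf0 : poisson_pmf r 0 = expR (- r) by rewrite /poisson_pmf r0 expr0 mul1r invr1 mul1r.
have tail : \sum_(0 <= n <oo) (poisson_pmf r n.+1)%:E = (1 - expR (- r))%:E.
  have := poisson_pmf_sum1; rewrite nneseries_recl0 => [|n]; last first.
    by rewrite lee_fin poisson_pmf_ge0.
  by rewrite pmf0; case: (\sum_(0 <= n <oo) _) => // s [<-]; rewrite addrC addrK.
have r_neq0 : r != 0%R by rewrite gt_eqF.
under eq_eseriesr => n _.
  have n1 : (n.+1%:R : R) != 0%R by rewrite pnatr_eq0.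
  rewrite (_ : (_ / _ = r^-1 * poisson_pmf r n.+1)%R); last first.
    by rewrite -[poisson_pmf r n.+1](mulfK n1) poisson_pmfS mulrA mulKf.
  rewrite EFinM; over.
rewrite nneseriesZl => [|n _]; last by rewrite lee_fin poisson_pmf_ge0.
by rewrite tail -EFinM mulrC.
Qed.

End poisson_moments.

Lemma ratio_le_mix (R : realFieldType) (a x y : R) :
  (0 <= a)%R -> (0 <= x)%R -> (0 <= y)%R ->
  (x / (x + y + 1) <= (a ^+ 2 + x / (y + 1)) / (1 + a) ^+ 2)%R.
Proof.
move=> a0 x0 y0; rewrite -subr_ge0.
have y1 : (y + 1 != 0)%R by rewrite gt_eqF//; lra.
have xy1 : (x + y + 1 != 0)%R by rewrite gt_eqF//; lra.
have a1 : (1 + a != 0)%R by rewrite gt_eqF//; lra.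
have -> : ((a ^+ 2 + x / (y + 1)) / (1 + a) ^+ 2 - x / (x + y + 1) =
    (a * (y + 1) - x) ^+ 2 / ((y + 1) * (x + y + 1) * (1 + a) ^+ 2))%R.
  by field; rewrite y1 xy1 a1.
by rewrite divr_ge0 ?sqr_ge0// !mulr_ge0 ?sqr_ge0//; lra.
Qed.

Section upper_bound.
Variables (R : realType) (lx ly : R).
Hypotheses (hx : (0 < lx)%R) (hy : (0 < ly)%R).

Let mix (a : R) (m n : nat) : R :=
  (poisson_pmf lx m * poisson_pmf ly n * ((a ^+ 2 + m%:R / n.+1%:R) / (1 + a) ^+ 2))%R.

Lemma E_ratio_le_mix (a : R) : (0 <= a)%R ->
  E_ratio lx ly <= \sum_(0 <= m <oo) \sum_(0 <= n <oo) (mix a m n)%:E.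
Proof.
move=> a0; have pmf_ge0 := @poisson_pmf_ge0 R.
apply: lee_nneseries => [m _ _|m _].
  by apply: nneseries_ge0 => n _ _; rewrite lee_fin !mulr_ge0 ?divr_ge0 ?addr_ge0.
apply: lee_nneseries => [n _ _|n _].
  by rewrite lee_fin !mulr_ge0 ?divr_ge0 ?addr_ge0.
by rewrite lee_fin ler_wpM2l ?mulr_ge0// -natr1 ratio_le_mix.
Qed.

Lemma mix_series (a : R) : (0 <= a)%R ->
  \sum_(0 <= m <oo) \sum_(0 <= n <oo) (mix a m n)%:E =
  ((a ^+ 2 + lx * ((1 - expR (- ly)) / ly)) / (1 + a) ^+ 2)%:E.
Proof.
move=> a0; set Sy := ((1 - expR (- ly)) / ly)%R; set k := ((1 + a) ^+ 2)^-1%R.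
have pmf_ge0 := @poisson_pmf_ge0 R.
have k0 : (0 <= k)%R by rewrite invr_ge0 sqr_ge0.
have Sy0 : (0 <= Sy)%R.
  by rewrite divr_ge0 ?subr_ge0 ?expR_le1 ?oppr_le0 ?ltW.
have inner m : \sum_(0 <= n <oo) (mix a m n)%:E =
    (a ^+ 2 * k * poisson_pmf lx m + Sy * k * (poisson_pmf lx m * m%:R))%:E.
  have -> : (a ^+ 2 * k * poisson_pmf lx m + Sy * k * (poisson_pmf lx m * m%:R) =
      (a ^+ 2 * k * poisson_pmf lx m) * 1 + (k * poisson_pmf lx m * m%:R) * Sy)%R.
    by ring.
  rewrite -(@nneseries_lincomb R (poisson_pmf ly) (fun n => poisson_pmf ly n / n.+1%:R))%R
    ?poisson_pmf_sum1 ?poisson_pmf_mean_invS//.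
  - by apply: eq_eseriesr => n _; rewrite /mix -/k; congr EFin; ring.
  - by move=> n; rewrite divr_ge0.
  - by rewrite !mulr_ge0 ?sqr_ge0.
  - by rewrite !mulr_ge0.
under eq_eseriesr do rewrite inner.
rewrite (@nneseries_lincomb R (poisson_pmf lx) (fun m => poisson_pmf lx m * m%:R) _ _ 1 lx)%R
  ?poisson_pmf_sum1 ?poisson_pmf_mean//.
- by congr EFin; ring.
- by move=> n; rewrite mulr_ge0.
- by rewrite !mulr_ge0 ?sqr_ge0.
- exact: mulr_ge0.
Qed.

Lemma E_ratio_le_ub : E_ratio lx ly <= (ub lx ly)%:E.
Proof.
set a := alpha lx ly.
have aE : a = (lx * ((1 - expR (- ly)) / ly))%R by rewrite /a /alpha; ring.
have a0 : (0 <= a)%R.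
  by rewrite aE !mulr_ge0 ?invr_ge0 ?subr_ge0 ?expR_le1 ?oppr_le0 ?ltW.
apply: le_trans (E_ratio_le_mix _ a0) _; rewrite mix_series// -aE lee_fin /ub -/a.
have a1 : (1 + a != 0)%R by rewrite gt_eqF//; lra.
have -> : ((a ^+ 2 + a) / (1 + a) ^+ 2 = 1 - 1 / (1 + a))%R by field.
exact: lexx.
Qed.

End upper_bound.

Section lower_bound.
Variable R : realType.

Lemma expR_ge_expr_div_fact (x : R) n :
  (0 <= x)%R -> (x ^+ n / n`!%:R <= expR x)%R.
Proof.
case: n => [|n] x0; first by rewrite expr0 divr1 -expR0 ler_expR.
by apply: le_trans (expR_ge1Dxn n x0); rewrite lerDr.
Qed.

Lemma fact_div_expr_ge (r : R) n : (0 < r)%R ->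
  (n%:R / expR (2 * r) <= n`!%:R / r ^+ n)%R.
Proof.
move=> r0; set E := expR (2 * r).
have E0 : (0 < E)%R by rewrite expR_gt0.
have rn0 : (0 < r ^+ n)%R by rewrite exprn_gt0.
have n_le_2n : (n%:R <= 2 ^+ n :> R)%R by rewrite -natrX ler_nat ltnW// ltn_expl.
have := @expR_ge_expr_div_fact _ n (ltW (mulr_gt0 (ltr0Sn R 1) r0)).
rewrite -/E exprMn ler_pdivrMr ?ltr0n ?fact_gt0// => h.
rewrite ler_pdivrMr// mulrAC ler_pdivlMr// (le_trans (ler_wpM2r (ltW rn0) n_le_2n))//.
by rewrite [(_ * E)%R]mulrC.
Qed.

Lemma lb_series_pinfty (ly : R) : (0 < ly)%R -> lb_series ly = +oo.
Proof.
move=> hy; apply: nneseries_unbounded_pinfty => [j|A].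
  by rewrite lee_fin divr_ge0// exprn_ge0// ltW.
set E := expR (2 * ly); set m := (Num.truncn (A * E * ly)).+1.
have Am : (A * E * ly < m%:R)%R by apply: truncnS_gt.
exists m.+1 => //; rewrite lee_fin /= exprS invfM mulrA mulrAC.
rewrite ler_pdivlMr// (le_trans _ (fact_div_expr_ge ly m hy))//.
by rewrite ler_pdivlMr ?expR_gt0// ltW// mulrAC.
Qed.

End lower_bound.

Theorem lemma2 (R : realType) (lx ly : R) (hx : (0 < lx)%R) (hy : (0 < ly)%R) :
  lb lx ly <= E_ratio lx ly /\ E_ratio lx ly <= (ub lx ly)%:E.
Proof.
split; last exact: E_ratio_le_ub.
have c0 : (0 < lx * (1 + lx) / ly)%R by rewrite divr_gt0// mulr_gt0// addr_gt0.
by rewrite /lb lb_series_pinfty// mulry gtr0_sg// mul1e addeNy leNye.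
Qed.
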